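(* Let $(\gamma_{n})_{n\in\mathbb{N}}$ be nonnegative integrable functions on $[0,\infty)$ with $\rho:=\sup_{n\in\mathbb{N}}\int_{0}^{\infty}\gamma_{n}(t)dt<1$. For $M\in\mathbb{N}$ and $s\ge0$ set $C_{M}^{1}(s,M)=1$, $C_{M}^{2}(s,M)=0$, and recursively for $1\le n<M$, $$C_{n}^{1}(s,M):=1+\int_{0}^{s}C_{n+1}^{1}(s-r,M)\gamma_{n}(r)\,dr,$$ $$C_{n}^{2}(s,M):=\int_{0}^{s}\left(C_{n+1}^{2}(s-r,M)+\tfrac{1}{2}[C_{n+1}^{1}(s-r,M)]^{2}\right)\gamma_{n}(r)\,dr.$$ Then for all $M\in\mathbb{N}$, $1\le n\le M$ and $s\ge0$, $$C_{n}^{1}(s,M)\le\frac{1}{1-\rho}\qquad\text{and}\qquad C_{n}^{2}(s,M)\le\frac{1}{(1-\rho)^{3}}.$$ *)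

From HB Require Import structures.
From mathcomp Require Import all_boot all_order all_algebra.
From mathcomp Require Import all_classical all_reals all_analysis.
Set Implicit Arguments. Unset Strict Implicit. Unset Printing Implicit Defensive.
Import Order.TTheory GRing.Theory Num.Theory.
Import numFieldNormedType.Exports.
Local Open Scope classical_set_scope.
Local Open Scope ring_scope.
Local Open Scope ereal_scope.

(* Cfun1 R gamma M k s  =  C^1_{M-k}(s, M)   (k = M - n steps remaining) *)
Fixpoint Cfun1 (R : realType) (gamma : nat -> R -> R) (M k : nat) (s : R) : \bar R :=
  match k with
  | 0 => 1
  | k'.+1 => 1 + \int[@lebesgue_measure R]_(r in `[0%R, s]%classic)
                   (Cfun1 gamma M k' (s - r)%R * (gamma (M - k'.+1)%N r)%:E)
  end.

(* Cfun2 R gamma M k s  =  C^2_{M-k}(s, M) *)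
Fixpoint Cfun2 (R : realType) (gamma : nat -> R -> R) (M k : nat) (s : R) : \bar R :=
  match k with
  | 0 => 0
  | k'.+1 => \int[@lebesgue_measure R]_(r in `[0%R, s]%classic)
               ((Cfun2 gamma M k' (s - r)%R
                 + (2^-1)%:E * (Cfun1 gamma M k' (s - r)%R * Cfun1 gamma M k' (s - r)%R))
                * (gamma (M - k'.+1)%N r)%:E)
  end.

Definition C1 (R : realType) (gamma : nat -> R -> R) (n : nat) (s : R) (M : nat) : \bar R :=
  Cfun1 gamma M (M - n)%N s.
Definition C2 (R : realType) (gamma : nat -> R -> R) (n : nat) (s : R) (M : nat) : \bar R :=
  Cfun2 gamma M (M - n)%N s.

From HB Require Import structures.
From mathcomp Require Import all_boot all_order all_algebra.
From mathcomp Require Import all_classical all_reals all_analysis.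
From mathcomp Require Import measurable_realfun.
From mathcomp.algebra_tactics Require Import lra.
From mathcomp.zify Require Import zify.

Set Implicit Arguments.
Unset Strict Implicit.
Unset Printing Implicit Defensive.
Import Order.TTheory GRing.Theory Num.Theory.
Import numFieldNormedType.Exports.
Local Open Scope classical_set_scope.
Local Open Scope ring_scope.
Local Open Scope ereal_scope.

(* If every kernel has
   mass at most rho, a bound c on C^1_{n+1} gives C^1_n <= 1 + c rho, and
   a = 1/(1 - rho) is exactly the fixed point a = 1 + a rho.  Likewise bounds
   a^3 on C^2_{n+1} and a on C^1_{n+1} give C^2_n <= (a^3 + a^2/2) rho, which
   is at most a^3 because a^3 (1 - rho) = a^2. *)

(* [Cfun1] and [Cfun2] are not known to be measurable, so [ge0_le_integral]
   does not apply to them. *)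
Lemma ge0_le_integral_nonmeasurable d (T : measurableType d) (R : realType)
    (mu : {measure set T -> \bar R}) (D : set T) (f1 f2 : T -> \bar R) :
  (forall x, D x -> 0 <= f1 x) -> (forall x, D x -> f1 x <= f2 x) ->
  \int[mu]_(x in D) f1 x <= \int[mu]_(x in D) f2 x.
Proof.
move=> f10 f12.
have f20 x : D x -> 0 <= f2 x by move=> Dx; exact: le_trans (f10 x Dx) (f12 x Dx).
rewrite ge0_integralE // [leRHS]ge0_integralE //.
apply: ereal_sup_le => _ [h hf1 <-]; exists h => // x.
apply: le_trans (hf1 x) _; rewrite !patchE; case: ifP => // /set_mem Dx.
exact: f12.
Qed.

Lemma ge0_integral_bounded_mul_le d (T : measurableType d) (R : realType)
    (mu : {measure set T -> \bar R}) (D E : set T) (g : T -> R)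
    (f : T -> \bar R) (c : R) :
  measurable D -> measurable E -> D `<=` E ->
  measurable_fun E (EFin \o g) -> (forall x, E x -> (0 <= g x)%R) ->
  (0 <= c)%R -> (forall x, D x -> 0 <= f x <= c%:E) ->
  \int[mu]_(x in D) (f x * (g x)%:E) <= c%:E * \int[mu]_(x in E) (g x)%:E.
Proof.
move=> mD mE DE mg g0 c0 f0c.
have gD0 x : D x -> 0 <= (g x)%:E by move=> /DE Ex; rewrite lee_fin g0.
apply: (@le_trans _ _ (\int[mu]_(x in D) (c%:E * (g x)%:E))).
  apply: ge0_le_integral_nonmeasurable => x Dx; have /andP[f0 fc] := f0c x Dx.
    exact: mule_ge0 f0 (gD0 x Dx).
  exact: lee_wpmul2r (gD0 x Dx) _ _ fc.
rewrite ge0_integralZl_EFin //; last exact: measurable_funS mg.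
apply: lee_wpmul2l; first by rewrite lee_fin.
by apply: ge0_subset_integral => // x Ex; rewrite lee_fin g0.
Qed.

Section recursive_bounds.
Variables (R : realType) (gamma : nat -> R -> R) (rho : R) (M : nat).
Hypothesis gamma_ge0 : forall n, (0 < n)%N -> forall t, (0 <= t)%R -> (0 <= gamma n t)%R.
Hypothesis gamma_measurable : forall n, (0 < n)%N ->
  measurable_fun (`[0%R, +oo[ : set R) (EFin \o gamma n).
Hypothesis gamma_mass_le : forall n, (0 < n)%N ->
  \int[@lebesgue_measure R]_(t in `[0%R, +oo[) (gamma n t)%:E <= rho%:E.
Hypothesis rho_lt1 : (rho < 1)%R.
Variable a : R.
Hypothesis a_fixpoint : (a * (1 - rho) = 1)%R.

Lemma rho_ge0 : (0 <= rho)%R.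
Proof.
rewrite -lee_fin; apply: le_trans _ (gamma_mass_le (n := 1) isT).
apply: integral_ge0 => t; rewrite /= in_itv /= andbT => t0.
by rewrite lee_fin gamma_ge0.
Qed.

Lemma kernel_integral_le (n : nat) (s c : R) (f : R -> \bar R) : (0 < n)%N ->
  (0 <= c)%R -> (forall r, `[0%R, s]%classic r -> 0 <= f r <= c%:E) ->
  \int[@lebesgue_measure R]_(r in `[0%R, s]%classic) (f r * (gamma n r)%:E) <= (c * rho)%:E.
Proof.
move=> n0 c0 f0c; rewrite EFinM.
apply: le_trans (lee_wpmul2l _ (gamma_mass_le (n := n) n0)); last by rewrite lee_fin.
apply: ge0_integral_bounded_mul_le => //.
- by move=> r /=; rewrite !in_itv /= => /andP[->].
- exact: gamma_measurable.
- by move=> t; rewrite /= in_itv /= andbT; exact: gamma_ge0.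
Qed.

Lemma kernel_ge0 (k : nat) (s r : R) : (k < M)%N ->
  `[0%R, s]%classic r -> 0 <= (gamma (M - k)%N r)%:E.
Proof.
move=> kM; rewrite /= in_itv /= => /andP[r0 _].
by rewrite lee_fin gamma_ge0 // subn_gt0.
Qed.

Lemma itv_subr_ge0 (s r : R) : `[0%R, s]%classic r -> (0 <= s - r)%R.
Proof. by rewrite /= in_itv /= subr_ge0 => /andP[]. Qed.

Lemma a_gt0 : (0 < a)%R.
Proof. by have := a_fixpoint; have := rho_lt1; nra. Qed.

Lemma a_ge1 : (1 <= a)%R.
Proof. by have := a_fixpoint; have := a_gt0; have := rho_ge0; nra. Qed.

Lemma a_recursion1 : (1 + a * rho = a)%R.
Proof. by have := a_fixpoint; lra. Qed.

Lemma a_recursion2 : ((a ^+ 3 + 2^-1 * (a * a)) * rho <= a ^+ 3)%R.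
Proof.
have a3_fixpoint : (a ^+ 3 * (1 - rho) = a * a)%R.
  by rewrite exprSr -mulrA a_fixpoint mulr1 expr2.
by have := a_gt0; have := rho_ge0; have := rho_lt1; nra.
Qed.

Lemma Cfun1_bound (k : nat) (s : R) : (k < M)%N -> (0 <= s)%R ->
  0 <= Cfun1 gamma M k s <= a%:E.
Proof.
elim: k s => [|k IH] s kM s0 /=; first by rewrite lee01 lee_fin a_ge1.
have IHr r : `[0%R, s]%classic r -> 0 <= Cfun1 gamma M k (s - r) <= a%:E.
  by move=> /itv_subr_ge0; apply: IH; lia.
apply/andP; split.
  apply: adde_ge0 => //; apply: integral_ge0 => r sr.
  have /andP[C1_0 _] := IHr r sr; exact: mule_ge0 C1_0 (kernel_ge0 kM sr).
apply: (@le_trans _ _ (1 + (a * rho)%:E)).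
  by apply: leeD => //; apply: kernel_integral_le => //; [lia|exact: ltW a_gt0].
by rewrite -EFinD a_recursion1.
Qed.

Lemma Cfun2_bound (k : nat) (s : R) : (k < M)%N -> (0 <= s)%R ->
  0 <= Cfun2 gamma M k s <= (a ^+ 3)%:E.
Proof.
elim: k s => [|k IH] s kM s0 /=.
  by rewrite lexx lee_fin exprn_ge0 // ltW // a_gt0.
have bounds r : `[0%R, s]%classic r ->
    0 <= Cfun2 gamma M k (s - r) + (2^-1)%:E * (Cfun1 gamma M k (s - r) * Cfun1 gamma M k (s - r))
      <= (a ^+ 3 + 2^-1 * (a * a))%R%:E.
  move=> /itv_subr_ge0 sr0.
  have /andP[C1_0 C1_a] := Cfun1_bound (ltnW kM) sr0.
  have /andP[C2_0 C2_a] := IH _ (ltnW kM) sr0.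
  apply/andP; split.
    by apply: adde_ge0 => //; apply: mule_ge0; [rewrite lee_fin|exact: mule_ge0].
  rewrite EFinD !EFinM; apply: leeD => //.
  by apply: lee_wpmul2l; [rewrite lee_fin|exact: lee_pmul].
apply/andP; split.
  apply: integral_ge0 => r sr; have /andP[bound0 _] := bounds r sr.
  exact: mule_ge0 bound0 (kernel_ge0 kM sr).
apply: le_trans (kernel_integral_le _ _ bounds) _.
- by rewrite subn_gt0.
- by have := a_gt0; nra.
by rewrite lee_fin a_recursion2.
Qed.

End recursive_bounds.

Theorem lemma4p8 (R : realType) (gamma : nat -> R -> R) (rho : R)
  (hint : forall n : nat, (0 < n)%N ->
     (@lebesgue_measure R).-integrable `[0%R, +oo[%classic (fun t => (gamma n t)%:E))
  (hnn : forall n : nat, (0 < n)%N -> forall t : R, (0 <= t)%R -> (0 <= gamma n t)%R)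
  (hrho : ereal_sup [set \int[@lebesgue_measure R]_(t in `[0%R, +oo[%classic) (gamma n t)%:E
                     | n in [set n : nat | (0 < n)%N]] = rho%:E)
  (hrho1 : (rho < 1)%R) :
  forall (M n : nat) (s : R), (1 <= n)%N -> (n <= M)%N -> (0 <= s)%R ->
    C1 gamma n s M <= ((1 - rho)^-1)%:E /\
    C2 gamma n s M <= ((1 - rho) ^+ 3)^-1%:E.
Proof.
move=> M n s n1 nM s0.
have gamma_measurable m : (0 < m)%N -> measurable_fun (`[0%R, +oo[ : set R) (EFin \o gamma m).
  by move=> m0; have [] := integrableP _ _ _ (hint m m0).
have gamma_mass_le m : (0 < m)%N ->
    \int[@lebesgue_measure R]_(t in `[0%R, +oo[) (gamma m t)%:E <= rho%:E.
  by move=> m0; rewrite -hrho; apply: ereal_sup_ubound; exists m.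
have inv_fixpoint : ((1 - rho)^-1 * (1 - rho) = 1)%R.
  by rewrite mulVf // subr_eq0 gt_eqF.
have kM : (M - n < M)%N by lia.
rewrite /C1 /C2 -exprVn.
have /andP[_ ->] := Cfun1_bound hnn gamma_measurable gamma_mass_le hrho1 inv_fixpoint kM s0.
by have /andP[_ ->] := Cfun2_bound hnn gamma_measurable gamma_mass_le hrho1 inv_fixpoint kM s0.
Qed.
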